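(* Consider the following two-bidder auction. A single good has common value $v$ with CDF $F_v$, density $f_v$, support $\mathbb{R}_+$ and finite mean, and $\mathbb{E}[v]>L\ge 0$. Alice submits a bid knowing only $F_v$; then $v$ is realized and Bob, observing $v$ but not Alice's bid, submits a bid. The highest bid wins and pays its bid (payoff $v$ minus bid) unless it is strictly below the limit price $L$, in which case the good is unsold. If the bids tie, Bob wins; if Bob's bid equals $L$ he can win; a winning bid of Alice equal exactly to $L$ results in no sale. Then there is no (perfect Bayesian Nash) equilibrium in which Alice uses a pure strategy.
   Context: Bidders are risk neutral. *)

From HB Require Import structures.
From mathcomp Require Import all_boot all_order all_algebra.
From mathcomp Require Import all_classical all_reals all_analysis.
Set Implicit Arguments. Unset Strict Implicit. Unset Printing Implicit Defensive.
Import Order.TTheory GRing.Theory Num.Theory.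
Local Open Scope ring_scope.

Definition payA {R : realType} (L a b v : R) : R :=
  if (b < a) && (L < a) then v - a else 0.

Definition payB {R : realType} (L a b v : R) : R :=
  if (a <= b) && (L <= b) then v - b else 0.

Local Open Scope ereal_scope.

Definition utilA {R : realType} (P : probability R R) (k : R.-pker R ~> R)
  (L a : R) : \bar R :=
  \int[P]_v (\int[k v]_b (payA L a b v)%:E).

Definition utilB {R : realType} (k : R.-pker R ~> R) (L a v : R) : \bar R :=
  \int[k v]_b (payB L a b v)%:E.

(* Perfect Bayesian Nash equilibrium in which Alice plays the pure bid a and
   Bob plays the behavioural strategy k: Bob (who observes v, and whose belief
   about Alice's bid is correct, i.e. the point mass at a) best-responds at
   every realizable value v >= 0, and Alice's bid a is optimal given k. *)
Definition pure_alice_equilibrium {R : realType} (P : probability R R)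
  (L a : R) (k : R.-pker R ~> R) : Prop :=
  (forall v : R, (0 <= v)%R -> forall b' : R, (payB L a b' v)%:E <= utilB k L a v)
  /\ (forall a' : R, utilA P k L a' <= utilA P k L a).

From HB Require Import structures.
From mathcomp Require Import all_boot all_order all_algebra.
From mathcomp Require Import all_classical all_reals all_analysis.
From mathcomp Require Import measurable_realfun lra.
Import Order.TTheory GRing.Theory Num.Theory.
Local Open Scope ring_scope.
Local Open Scope classical_set_scope.
Local Open Scope ereal_scope.

(* If Alice bids a > L, Bob (who sees v and a) would lose money by outbidding her when
   v < a and gives up a profit by letting her win when v > a, so his best responses
   make Alice win only at values v < a, where she earns v - a < 0; on the event
   0 < v < a/2, which has positive probability, she loses more than a/2. So a is
   worse than bidding L, which earns 0. If a <= L, Alice earns 0, but Bob never bids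
   above L, so any bid c with L < c < E[v] always wins and earns E[v] - c > 0. *)

Section integral_lemmas.
Context {d} {T : measurableType d} {R : realType} {mu : {measure set T -> \bar R}}.

Lemma ae_le_measurable_integral (f g : T -> \bar R) :
  measurable_fun setT f -> measurable_fun setT g ->
  {ae mu, forall x, f x <= g x} -> \int[mu]_x f x <= \int[mu]_x g x.
Proof.
move=> mf mg fg; rewrite integralE [leRHS]integralE leeB //.
- apply: ae_ge0_le_integral => //; try exact: measurable_funepos.
  apply: (filterS _ fg) => x fgx _.
  by apply: (@funepos_le _ _ [set x] f g) => [y /set_mem -> //|]; exact/mem_set.
- apply: ae_ge0_le_integral => //; try exact: measurable_funeneg.
  apply: (filterS _ fg) => x fgx _.
  by apply: (@funeneg_le _ _ [set x] f g) => [y /set_mem -> //|]; exact/mem_set.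
Qed.

Lemma bounded_integrable (g : T -> R) (M : R) :
  mu setT < +oo -> measurable_fun setT g -> (forall x, `|g x| <= M)%R ->
  mu.-integrable setT (EFin \o g).
Proof.
move=> muT mg gM; apply: measurable_bounded_integrable => //.
exists M; split => [|N MN x _]; first exact: num_real.
exact: le_trans (gM x) (ltW MN).
Qed.

Lemma integral_indicZl (c : R) (A : set T) : mu setT < +oo -> measurable A ->
  \int[mu]_x (c * \1_A x)%:E = c%:E * mu A.
Proof.
move=> muT mA; under eq_integral do rewrite EFinM.
rewrite integralZl //; first by rewrite integral_indic // setIT.
apply: (@bounded_integrable _ 1) => // x.
by rewrite indicE; case: (_ \in _); rewrite ?normr1 ?normr0.
Qed.

Lemma measure_null_of_integral_deficit (g : T -> R) (c e : R) (S : set T) :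
  mu setT = 1 -> measurable S -> measurable_fun setT g -> (0 < e)%R ->
  (forall x, g x <= c)%R -> (forall x, S x -> g x <= c - e)%R ->
  c%:E <= \int[mu]_x (g x)%:E -> mu S = 0.
Proof.
move=> mu1 mS mg e0 gc gS cg.
have muT : mu setT < +oo by rewrite mu1 ltry.
have mindic : measurable_fun setT (fun x => e * \1_S x)%R.
  by apply: measurable_funM => //; exact: measurable_indic.
have g_le : \int[mu]_x (g x)%:E <= \int[mu]_x ((c - e * \1_S x)%R)%:E.
  apply: ae_le_measurable_integral; [exact: measurableT_comp|
    by apply: measurableT_comp => //; exact: measurable_funB|].
  apply: aeW => x; rewrite lee_fin indicE.
  by case: (boolP (x \in S)) => [/set_mem/gS|_]; rewrite ?mulr1 ?mulr0 ?subr0 ?gc.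
have int_step : \int[mu]_x ((c - e * \1_S x)%R)%:E = c%:E - e%:E * mu S.
  under eq_integral do rewrite EFinB.
  rewrite integralB_EFin //; last 2 first.
  - exact: (@bounded_integrable _ `|c|).
  - apply: (@bounded_integrable _ e) => // x; rewrite indicE normrM gtr0_norm //.
    by case: (_ \in _); rewrite ?normr1 ?normr0 ?mulr1 ?mulr0 // ltW.
  by rewrite integral_cst // mu1 mule1 integral_indicZl.
have : c%:E <= c%:E - e%:E * mu S by rewrite -int_step (le_trans cg g_le).
rewrite lee_suber_addr // -{2}(adde0 c%:E) leeD2lE // => eS_le0.
apply/eqP; rewrite eq_le measure_ge0 andbT.
by rewrite -(@pmule_rle0 _ e%:E) ?lte_fin.
Qed.

Lemma measure_eq1_of_setC_null (A : set T) :
  mu setT = 1 -> measurable A -> mu (~` A) = 0 -> mu A = 1.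
Proof.
move=> mu1 mA muC0; rewrite -mu1 -(setUv A) measureU //=.
- by rewrite muC0 adde0.
- exact: measurableC.
- exact: setICr.
Qed.

End integral_lemmas.

Local Close Scope ereal_scope.

Section bob_best_response.
Context {R : realType} (L a : R).

Definition bob_value (v : R) : R := Num.max (v - Num.max a L) 0.

Lemma payB_winning (b v : R) : Num.max a L <= b -> payB L a b v = v - b.
Proof. by rewrite ge_max /payB => ->. Qed.

Lemma payB_le_bob_value (b v : R) : payB L a b v <= bob_value v.
Proof.
rewrite /bob_value /payB le_max; case: ifP => [/andP[ab Lb]|_]; last first.
  by rewrite lexx orbT.
by rewrite lerD2l lerN2 ge_max ab Lb.
Qed.

Lemma bob_value_attained (v : R) : exists b, payB L a b v = bob_value v.
Proof.
rewrite /bob_value; case: (leP (Num.max a L) v) => [aLv|vaL].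
  by exists (Num.max a L); rewrite payB_winning //; apply/esym/max_idPl; rewrite subr_ge0.
exists (a - 1); have -> : Num.max (v - Num.max a L) 0 = 0.
  by apply/max_idPr; rewrite subr_le0 ltW.
by rewrite /payB (_ : (a <= a - 1) = false) //; apply/negbTE; rewrite -ltNge; lra.
Qed.

Lemma measurable_payB (v : R) : measurable_fun setT (fun b => payB L a b v).
Proof.
have -> : (fun b => payB L a b v) = (fun b => (v - b) * \1_`[Num.max a L, +oo[ b).
  apply/funext => b; rewrite /payB indicE mem_setE /= in_itv /= andbT ge_max.
  by case: ifP; rewrite ?mulr1 ?mulr0.
by apply: measurable_funM => //; exact: measurable_funB.
Qed.

End bob_best_response.

Section bob_equilibrium.
Context {R : realType} {L a v : R} {k : R.-pker R ~> R}.
Hypothesis bob_opt : forall b', ((payB L a b' v)%:E <= utilB k L a v)%E.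

Lemma kernel_null_of_suboptimal_bids (e : R) (S : set R) :
  0 < e -> measurable S -> (forall b, S b -> payB L a b v <= bob_value L a v - e) ->
  k v S = 0%E.
Proof.
move=> e0 mS hS; have [b' b'_opt] := bob_value_attained L a v.
apply: (measure_null_of_integral_deficit _ _ _ _ (prob_kernel v) mS
  (measurable_payB L a v) e0 _ _ (bob_opt b')) => [b|]; rewrite b'_opt //.
exact: payB_le_bob_value.
Qed.

Lemma bob_never_bids_above_value (c : R) :
  Num.max a L <= c -> v < c -> k v `[c, +oo[ = 0%E.
Proof.
move=> aLc vc; apply: (@kernel_null_of_suboptimal_bids (c - v)); rewrite ?subr_gt0 //.
move=> b /=; rewrite in_itv /= andbT => cb.
have : 0 <= bob_value L a v by rewrite /bob_value le_max lexx orbT.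
rewrite payB_winning ?(le_trans aLc) //; lra.
Qed.

Lemma bob_never_overbids (c : R) : Num.max a L < c -> k v `[c, +oo[ = 0%E.
Proof.
move=> aLc; apply: (@kernel_null_of_suboptimal_bids (c - Num.max a L)).
- by rewrite subr_gt0.
- by [].
move=> b /=; rewrite in_itv /= andbT => cb.
have : v - Num.max a L <= bob_value L a v by rewrite /bob_value le_max lexx.
rewrite payB_winning ?(le_trans (ltW aLc)) //; lra.
Qed.

Lemma bob_never_loses_profitable_sale : Num.max a L < v -> k v `]-oo, a[ = 0%E.
Proof.
move=> aLv; apply: (@kernel_null_of_suboptimal_bids (v - Num.max a L)).
- by rewrite subr_gt0.
- by [].
move=> b /=; rewrite in_itv /= => ba.
rewrite /payB (leNgt a b) ba /bob_value max_l ?subr_ge0 ?(ltW aLv) //; lra.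
Qed.

End bob_equilibrium.

Section alice_payoff.
Context {R : realType} {P : probability R R} {k : R.-pker R ~> R} {L : R}.
Local Open Scope ereal_scope.

Lemma utilA_le_limit (a : R) : (a <= L)%R -> utilA P k L a = 0.
Proof.
move=> aL; rewrite /utilA (eq_integral (cst 0)) ?integral0 // => v _.
rewrite (eq_integral (cst 0)) ?integral0 // => b _.
by rewrite /payA (ltNge L a) aL andbF.
Qed.

Lemma utilA_gt_limit (a : R) : (L < a)%R ->
  utilA P k L a = \int[P]_v ((v - a)%R%:E * k v `]-oo, a[).
Proof.
move=> La; apply: eq_integral => v _.
rewrite -integral_indicZl ?prob_kernel ?ltry //; apply: eq_integral => b _.
by rewrite /payA indicE mem_setE /= in_itv /= La andbT; case: ifP; rewrite ?mulr1 ?mulr0.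
Qed.

Lemma measurable_alice_profit (a : R) :
  measurable_fun setT (fun v : R => (v - a)%R%:E * k v `]-oo, a[).
Proof.
apply: emeasurable_funM; last exact: measurable_kernel.
by apply: measurableT_comp => //; exact: measurable_funB.
Qed.

Lemma ae_ge0_of_negative_null : P `]-oo, 0%R[ = 0 -> {ae P, forall v : R, (0 <= v)%R}.
Proof.
move=> P0; exists `]-oo, 0%R[; split => // v /= /negP.
by rewrite -ltNge in_itv.
Qed.

End alice_payoff.

Section alice_deviations.
Context {R : realType} {P : probability R R} {k : R.-pker R ~> R} {L a : R}.
Hypothesis bob_opt :
  forall v, (0 <= v)%R -> forall b', ((payB L a b' v)%:E <= utilB k L a v)%E.
Hypothesis P_nonneg : P `]-oo, 0%R[ = 0%E.
Local Open Scope ereal_scope.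

Lemma alice_profit_le_neg_indic (v : R) : (0 <= v)%R -> (L < a)%R ->
  (v - a)%R%:E * k v `]-oo, a[ <= (- (a / 2) * \1_`]0%R, (a / 2)%R[ v)%:E.
Proof.
move=> v0 La; have aL_a : Num.max a L = a by rewrite max_l // ltW.
rewrite indicE mem_setE /= in_itv /=.
case: (boolP ((0 < v) && (v < a / 2))%R) => [/andP[v_gt0 v_lt]|_].
  have bob_no_outbid : k v `[a, +oo[ = 0.
    have := bob_never_bids_above_value (bob_opt v v0) a; rewrite aL_a; apply => //; lra.
  rewrite (measure_eq1_of_setC_null _ (prob_kernel v)) //; last by rewrite setCitvl.
  by rewrite mule1 mulr1 lee_fin; lra.
rewrite mulr0; case: (leP v a) => [va|av].
  by apply: mule_le0_ge0 => //; rewrite lee_fin subr_le0.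
by rewrite (bob_never_loses_profitable_sale (bob_opt v v0)) ?mule0 ?aL_a.
Qed.

Lemma utilA_above_limit_lt0 : (0 <= L)%R -> (L < a)%R ->
  0 < P `]0%R, (a / 2)%R[ -> utilA P k L a < 0.
Proof.
move=> L0 La P_pos; rewrite utilA_gt_limit //.
apply: (@le_lt_trans _ _ (\int[P]_v (- (a / 2) * \1_`]0%R, (a / 2)%R[ v)%:E)).
  apply: ae_le_measurable_integral; first exact: measurable_alice_profit.
    by apply: measurableT_comp => //; apply: measurable_funM => //; exact: measurable_indic.
  by apply: (filterS _ (ae_ge0_of_negative_null P_nonneg)) => v v0; exact: alice_profit_le_neg_indic.
rewrite integral_indicZl //; last by rewrite /= probability_setT ltry.
by apply: mule_lt0_gt0 => //; rewrite lte_fin; lra.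
Qed.

Lemma utilA_overbid (c : R) : P.-integrable setT (fun v => v%:E) ->
  (Num.max a L < c)%R -> utilA P k L c = \int[P]_v v%:E - c%:E.
Proof.
move=> v_int aLc; rewrite utilA_gt_limit; last by move: aLc; rewrite gt_max => /andP[].
transitivity (\int[P]_v (v - c)%R%:E).
  apply: ae_eq_integral => //.
  - exact: measurable_alice_profit.
  - by apply: measurableT_comp => //; exact: measurable_funB.
  apply: (filterS _ (ae_ge0_of_negative_null P_nonneg)) => v v0 _.
  rewrite (measure_eq1_of_setC_null _ (prob_kernel v)) ?mule1 //.
  by rewrite setCitvl; exact: bob_never_overbids (bob_opt v v0) _ _.
under eq_integral do rewrite EFinB.
rewrite integralB_EFin //; last exact: finite_measure_integrable_cst.
by rewrite integral_cst //= probability_setT mule1.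
Qed.

End alice_deviations.

Theorem lemma1 (R : realType) (P : probability R R) (f : R -> R) (L : R) :
  (* v has density f (w.r.t. Lebesgue measure); F_v(x) = P `]-oo, x] *)
  measurable_fun setT f ->
  (forall x, (0 <= f x)%R) ->
  (forall A : set R, measurable A ->
     P A = (\int[lebesgue_measure]_(x in A) (f x)%:E)%E) ->
  (* support of v is R_+ *)
  P `]-oo, 0[ = 0%E ->
  (forall x y : R, (0 <= x)%R -> (x < y)%R -> (0 < P `]x, y[)%E) ->
  (* finite mean, E[v] > L >= 0 *)
  P.-integrable setT (fun v : R => v%:E) ->
  (0 <= L)%R ->
  (L%:E < \int[P]_v v%:E)%E ->
  ~ (exists (a : R) (k : R.-pker R ~> R), pure_alice_equilibrium P L a k).
Proof.
move=> _ _ _ P_nonneg P_pos v_int L0 L_lt_mean [a [k [bob_opt alice_opt]]].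
have [La|aL] := ltP L a.
  have := alice_opt L; rewrite (utilA_le_limit _ (lexx L)) leNgt => /negP; apply.
  by apply: utilA_above_limit_lt0 => //; apply: P_pos; lra.
have [m mean_m] : exists m : R, (\int[P]_v v%:E = m%:E)%E.
  by exists (fine (\int[P]_v v%:E)); rewrite fineK // integrable_fin_num.
pose c := ((L + m) / 2)%R.
have Lm : (L < m)%R by rewrite -lte_fin -mean_m.
have := alice_opt c; rewrite (utilA_le_limit _ aL) (utilA_overbid bob_opt P_nonneg c v_int).
  by rewrite mean_m -EFinB lee_fin /c; lra.
by rewrite max_r // /c; lra.
Qed.
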